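(* Let $\mathcal{C}\subseteq 2^{[n]}$ and $\mathcal{D}\subseteq 2^{[m]}$ be nonempty codes, and let $\mathcal{C}\times\mathcal{D}=\{c\cup(d+n)\mid c\in\mathcal{C},d\in\mathcal{D}\}\subseteq 2^{[n+m]}$, where $d+n=\{j+n\mid j\in d\}$. Then $\mathcal{C}$ and $\mathcal{D}$ are both convex if and only if $\mathcal{C}\times\mathcal{D}$ is convex, and in that case $\mathrm{mindim}(\mathcal{C}\times\mathcal{D})\le\mathrm{mindim}(\mathcal{C})+\mathrm{mindim}(\mathcal{D})$.
   Context: A code is a subset $\mathcal{C}\subseteq 2^{[n]}$. Given $U_1,\dots,U_n\subseteq X$, $\mathrm{code}(\mathcal{U},X)=\{\sigma\subseteq[n]\mid \bigcap_{i\in\sigma}U_i\setminus\bigcup_{j\notin\sigma}U_j\neq\emptyset\}$ with the empty intersection equal to $X$. A code is convex if it equals $\mathrm{code}(\mathcal{U},X)$ for some open convex $X\subseteq\mathbb{R}^d$ and convex open $U_i\subseteq X$; $\mathrm{mindim}$ is the least such $d$. *)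

From Stdlib Require Import Reals.
From mathcomp Require Import all_boot.
Set Implicit Arguments. Unset Strict Implicit. Unset Printing Implicit Defensive.

Definition pt (d : nat) := 'I_d -> R.

(* Open in the Euclidean topology (written with the equivalent sup-norm balls). *)
Definition is_open (d : nat) (U : pt d -> Prop) : Prop :=
  forall x, U x -> exists eps : R, Rlt 0 eps /\
    forall y : pt d, (forall i, Rlt (Rabs (Rminus (y i) (x i))) eps) -> U y.

Definition is_convex (d : nat) (U : pt d -> Prop) : Prop :=
  forall x y, U x -> U y -> forall t : R, Rle 0 t -> Rle t 1 ->
    U (fun i => Rplus (Rmult t (x i)) (Rmult (Rminus 1 t) (y i))).

(* C = code(U, X): sigma in C iff some point of X lies in U_i exactly for i in sigma
   (the empty intersection being X). *)
Definition is_code_of (n d : nat) (C : {set {set 'I_n}})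
    (U : 'I_n -> pt d -> Prop) (X : pt d -> Prop) : Prop :=
  forall sigma : {set 'I_n}, sigma \in C <->
    exists x : pt d, X x /\ (forall i, i \in sigma -> U i x)
                          /\ (forall j, j \notin sigma -> ~ U j x).

Definition convex_in_dim (n : nat) (C : {set {set 'I_n}}) (d : nat) : Prop :=
  exists (X : pt d -> Prop) (U : 'I_n -> pt d -> Prop),
    is_open X /\ is_convex X /\
    (forall i, is_open (U i) /\ is_convex (U i) /\ (forall x, U i x -> X x)) /\
    is_code_of C U X.

Definition convex_code (n : nat) (C : {set {set 'I_n}}) : Prop :=
  exists d, convex_in_dim C d.

Definition is_mindim (n : nat) (C : {set {set 'I_n}}) (k : nat) : Prop :=
  convex_in_dim C k /\ forall d, convex_in_dim C d -> (k <= d)%N.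

(* C x D = { c u (d + n) }, with [n] embedded by lshift and d+n by rshift. *)
Definition code_prod (n m : nat) (C : {set {set 'I_n}}) (D : {set {set 'I_m}})
  : {set {set 'I_(n + m)}} :=
  [set (@lshift n m @: c) :|: (@rshift n m @: e) | c : {set 'I_n} in C, e : {set 'I_m} in D].

From Stdlib Require Import Reals.
From mathcomp Require Import all_boot boolp.

Set Implicit Arguments. Unset Strict Implicit. Unset Printing Implicit Defensive.

(* If C and D are realized by U_i in X (in R^a) and V_j in Y (in R^b), then the
   sets U_i x Y and X x V_j in X x Y (in R^(a+b)) realize C x D: a point (x, y)
   has label set c u (e + n) exactly when x has label c and y has label e.
   Conversely, keeping only the first n sets of a realization of C x D realizes
   the code of their label sets { c | c u (e + n) in C x D }, which is C as soon
   as D is nonempty; symmetrically for D. *)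

Lemma is_open_setI d (P Q : pt d -> Prop) :
  is_open P -> is_open Q -> is_open (fun z => P z /\ Q z).
Proof.
move=> oP oQ x [Px Qx].
have [e1 [e1_gt0 P_ball]] := oP x Px; have [e2 [e2_gt0 Q_ball]] := oQ x Qx.
exists (Rmin e1 e2); split; first exact: Rmin_pos.
move=> y near_xy; split; [apply: P_ball|apply: Q_ball] => i.
- exact: Rlt_le_trans (near_xy i) (Rmin_l _ _).
- exact: Rlt_le_trans (near_xy i) (Rmin_r _ _).
Qed.

Lemma is_convex_setI d (P Q : pt d -> Prop) :
  is_convex P -> is_convex Q -> is_convex (fun z => P z /\ Q z).
Proof.
by move=> cP cQ x y [Px Qx] [Py Qy] t t_ge0 t_le1; split; [exact: cP|exact: cQ].
Qed.

Lemma is_open_comp a b (f : 'I_a -> 'I_b) (A : pt a -> Prop) :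
  is_open A -> is_open (fun z : pt b => A (fun i => z (f i))).
Proof.
move=> oA x Ax; have [e [e_gt0 A_ball]] := oA _ Ax.
by exists e; split => // y near_xy; apply: A_ball => i; apply: near_xy.
Qed.

Lemma is_convex_comp a b (f : 'I_a -> 'I_b) (A : pt a -> Prop) :
  is_convex A -> is_convex (fun z : pt b => A (fun i => z (f i))).
Proof. by move=> cA x y Ax Ay t t_ge0 t_le1; apply: cA. Qed.

Definition code_preim N n (f : 'I_n -> 'I_N) (K : {set {set 'I_N}}) :
  {set {set 'I_n}} := [set f @^-1: s | s : {set 'I_N} in K].

Lemma is_code_of_preim d N n (f : 'I_n -> 'I_N) (K : {set {set 'I_N}})
    (T : 'I_N -> pt d -> Prop) (W : pt d -> Prop) :
  is_code_of K T W -> is_code_of (code_preim f K) (fun i => T (f i)) W.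
Proof.
move=> codeK c; split.
- case/imsetP => s /codeK [x [Wx [Tx nTx]]] ->.
  exists x; split=> //; split=> i; rewrite inE; [exact: Tx|exact: nTx].
- move=> [x [Wx [Tx nTx]]]; apply/imsetP.
  exists [set k | `[< T k x >]].
    apply/codeK; exists x; split=> //.
    by split=> k; rewrite inE => /asboolP.
  apply/setP => i; rewrite !inE; apply/esym.
  by case: (boolP (i \in c)) => [/Tx|/nTx] ?; apply/asboolP.
Qed.

Lemma convex_in_dim_preim N n (f : 'I_n -> 'I_N) (K : {set {set 'I_N}}) d :
  convex_in_dim K d -> convex_in_dim (code_preim f K) d.
Proof.
move=> [W [T [oW [cW [T_cvx codeK]]]]].
by exists W, (fun i => T (f i)); do 3!split => //; apply: is_code_of_preim.
Qed.

Section ProductCode.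
Variables (n m : nat).
Implicit Types (c : {set 'I_n}) (e : {set 'I_m}).

Lemma mem_lshift_prod c e i :
  (lshift m i \in @lshift n m @: c :|: @rshift n m @: e) = (i \in c).
Proof.
rewrite inE (mem_imset _ _ (@lshift_inj n m)).
case: (boolP (i \in c)) => //= _.
by apply/imsetP => -[j _ /eqP]; rewrite eq_lrshift.
Qed.

Lemma mem_rshift_prod c e j :
  (rshift n j \in @lshift n m @: c :|: @rshift n m @: e) = (j \in e).
Proof.
rewrite inE (mem_imset _ _ (@rshift_inj n m)) orbC.
case: (boolP (j \in e)) => //= _.
by apply/imsetP => -[i _ /eqP]; rewrite eq_rlshift.
Qed.

Lemma preim_lshift_prod c e :
  @lshift n m @^-1: (@lshift n m @: c :|: @rshift n m @: e) = c.
Proof. by apply/setP => i; rewrite inE mem_lshift_prod. Qed.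

Lemma preim_rshift_prod c e :
  @rshift n m @^-1: (@lshift n m @: c :|: @rshift n m @: e) = e.
Proof. by apply/setP => j; rewrite inE mem_rshift_prod. Qed.

Lemma set_split_shift (s : {set 'I_(n + m)}) :
  s = @lshift n m @: (@lshift n m @^-1: s)
      :|: @rshift n m @: (@rshift n m @^-1: s).
Proof.
apply/setP => k; case: (split_ordP k) => [i|j] ->.
- by rewrite mem_lshift_prod inE.
- by rewrite mem_rshift_prod inE.
Qed.

Lemma code_preim_lshift_prod (C : {set {set 'I_n}}) (D : {set {set 'I_m}}) :
  D != set0 -> code_preim (@lshift n m) (code_prod C D) = C.
Proof.
case/set0Pn => e eD; apply/setP => c; apply/imsetP/idP.
- by case=> _ /imset2P [c' e' c'C _ ->] ->; rewrite preim_lshift_prod.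
- move=> cC; exists (@lshift n m @: c :|: @rshift n m @: e); last first.
    by rewrite preim_lshift_prod.
  by apply/imset2P; exact: (Imset2spec cC eD).
Qed.

Lemma code_preim_rshift_prod (C : {set {set 'I_n}}) (D : {set {set 'I_m}}) :
  C != set0 -> code_preim (@rshift n m) (code_prod C D) = D.
Proof.
case/set0Pn => c cC; apply/setP => e; apply/imsetP/idP.
- by case=> _ /imset2P [c' e' _ e'D ->] ->; rewrite preim_rshift_prod.
- move=> eD; exists (@lshift n m @: c :|: @rshift n m @: e); last first.
    by rewrite preim_rshift_prod.
  by apply/imset2P; exact: (Imset2spec cC eD).
Qed.

End ProductCode.

Section ProductRealization.
Variables (a b : nat).

Definition lpart (z : pt (a + b)) : pt a := fun i => z (lshift b i).
Definition rpart (z : pt (a + b)) : pt b := fun j => z (rshift a j).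

Definition glue (x : pt a) (y : pt b) : pt (a + b) :=
  fun k => match split k with inl i => x i | inr j => y j end.

Lemma lpart_glue x y : lpart (glue x y) = x.
Proof. by apply: funext => i; rewrite /lpart /glue (unsplitK (inl _ i)). Qed.

Lemma rpart_glue x y : rpart (glue x y) = y.
Proof. by apply: funext => j; rewrite /rpart /glue (unsplitK (inr _ j)). Qed.

Variables (n m : nat) (X : pt a -> Prop) (U : 'I_n -> pt a -> Prop).
Variables (Y : pt b -> Prop) (V : 'I_m -> pt b -> Prop).

Definition prod_domain (z : pt (a + b)) : Prop := X (lpart z) /\ Y (rpart z).

Definition prod_cover (k : 'I_(n + m)) (z : pt (a + b)) : Prop :=
  prod_domain z /\
  match split k with inl i => U i (lpart z) | inr j => V j (rpart z) end.

Lemma prod_cover_lshift i z :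
  prod_cover (lshift m i) z <-> prod_domain z /\ U i (lpart z).
Proof. by rewrite /prod_cover (unsplitK (inl _ i)). Qed.

Lemma prod_cover_rshift j z :
  prod_cover (rshift n j) z <-> prod_domain z /\ V j (rpart z).
Proof. by rewrite /prod_cover (unsplitK (inr _ j)). Qed.

Lemma is_open_prod_domain : is_open X -> is_open Y -> is_open prod_domain.
Proof.
move=> oX oY; apply: is_open_setI.
- exact: (is_open_comp (f := @lshift a b) oX).
- exact: (is_open_comp (f := @rshift a b) oY).
Qed.

Lemma is_convex_prod_domain : is_convex X -> is_convex Y -> is_convex prod_domain.
Proof.
move=> cX cY; apply: is_convex_setI.
- exact: (is_convex_comp (f := @lshift a b) cX).
- exact: (is_convex_comp (f := @rshift a b) cY).
Qed.

Lemma is_code_of_prod (C : {set {set 'I_n}}) (D : {set {set 'I_m}}) :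
  is_code_of C U X -> is_code_of D V Y ->
  is_code_of (code_prod C D) prod_cover prod_domain.
Proof.
move=> codeC codeD s; split.
- case/imset2P => c e /codeC [x [Xx [Ux nUx]]] /codeD [y [Yy [Vy nVy]]] ->.
  have dom_xy : prod_domain (glue x y).
    by rewrite /prod_domain lpart_glue rpart_glue.
  exists (glue x y); split=> //; split=> k; case: (split_ordP k) => [i|j] ->.
  + by rewrite mem_lshift_prod prod_cover_lshift lpart_glue => /Ux.
  + by rewrite mem_rshift_prod prod_cover_rshift rpart_glue => /Vy.
  + by rewrite mem_lshift_prod prod_cover_lshift lpart_glue => /nUx ? [].
  + by rewrite mem_rshift_prod prod_cover_rshift rpart_glue => /nVy ? [].
- move=> [z [[Xz Yz] [cov_z ncov_z]]].
  apply/imset2P.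
  apply: (Imset2spec (x1 := @lshift n m @^-1: s) (x2 := @rshift n m @^-1: s)).
  + apply/codeC; exists (lpart z); split=> //; split=> i; rewrite inE.
    * by move/cov_z/prod_cover_lshift => [].
    * by move=> /ncov_z ncov Ui; apply/ncov/prod_cover_lshift.
  + apply/codeD; exists (rpart z); split=> //; split=> j; rewrite inE.
    * by move/cov_z/prod_cover_rshift => [].
    * by move=> /ncov_z ncov Vj; apply/ncov/prod_cover_rshift.
  + exact: set_split_shift.
Qed.

End ProductRealization.

Lemma convex_in_dim_prod n m (C : {set {set 'I_n}}) (D : {set {set 'I_m}}) a b :
  convex_in_dim C a -> convex_in_dim D b -> convex_in_dim (code_prod C D) (a + b).
Proof.
move=> [X [U [oX [cX [U_cvx codeC]]]]] [Y [V [oY [cY [V_cvx codeD]]]]].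
have o_dom := is_open_prod_domain oX oY.
have c_dom := is_convex_prod_domain cX cY.
exists (prod_domain X Y), (prod_cover X U Y V); do 2!split=> //.
split=> [k|]; last exact: is_code_of_prod.
split; [|split; last by move=> z []].
- rewrite /prod_cover; case: (split k) => [i|j]; apply: (is_open_setI o_dom).
  + exact: (is_open_comp (f := @lshift a b) (U_cvx i).1).
  + exact: (is_open_comp (f := @rshift a b) (V_cvx j).1).
- rewrite /prod_cover; case: (split k) => [i|j]; apply: (is_convex_setI c_dom).
  + exact: (is_convex_comp (f := @lshift a b) (U_cvx i).2.1).
  + exact: (is_convex_comp (f := @rshift a b) (V_cvx j).2.1).
Qed.

Theorem theorem4p3 (n m : nat) (C : {set {set 'I_n}}) (D : {set {set 'I_m}}) :
  C != set0 -> D != set0 ->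
  ((convex_code C /\ convex_code D) <-> convex_code (code_prod C D)) /\
  (convex_code C -> convex_code D ->
     forall kC kD kCD : nat,
       is_mindim C kC -> is_mindim D kD -> is_mindim (code_prod C D) kCD ->
       (kCD <= kC + kD)%N).
Proof.
move=> C0 D0; split; first split.
- by move=> [[a Ca] [b Db]]; exists (a + b)%N; apply: convex_in_dim_prod.
- move=> [d CDd]; split; exists d.
  + rewrite -(code_preim_lshift_prod C D0); exact: convex_in_dim_preim CDd.
  + rewrite -(code_preim_rshift_prod D C0); exact: convex_in_dim_preim CDd.
- move=> _ _ kC kD kCD [Ck _] [Dk _] [_ CD_min].
  exact: CD_min (convex_in_dim_prod Ck Dk).
Qed.
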